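(* Let $(\mathcal A,X,\alpha)$ be a PTS of type $\diamond\in\{0,*,\omega,\infty\}$ and let $\mathbf{tr}(x)$ denote the unique extension to $\sigma(\mathcal S_\diamond)$ of the trace pre-measure. Then for every $S\in\sigma(\mathcal S_\diamond)$ the function $X\to[0,1]$, $x\mapsto\mathbf{tr}(x)(S)$, is Borel measurable. Consequently $\mathbf{tr}:X\to T\mathcal A^\diamond$ (with $T=\mathbb S$ for $\diamond\in\{0,*\}$ and $T=\mathbb P$ for $\diamond\in\{\omega,\infty\}$, and $\mathcal A^0:=\emptyset$) is a measurable map, i.e. a Kleisli arrow of $T$.
   Context: $\mathcal A$ finite alphabet with $\sigma$-algebra $\mathcal P(\mathcal A)$; $\mathbf 1=\{\checkmark\}$. $\mathbb S(Y)$ / $\mathbb P(Y)$: sub-probability / probability measures on $\Sigma_Y$ with the smallest $\sigma$-algebra making evaluation maps $P\mapsto P(S)$ Borel measurable. A PTS of type $\diamond$ is $(\mathcal A,X,\alpha)$ with $\alpha$ a measurable map $X\to\mathbb S(\mathcal A\times X)$ ($0$), $X\to\mathbb S(\mathcal A\times X+\mathbf 1)$ ($*$), $X\to\mathbb P(\mathcal A\times X)$ ($\omega$), $X\to\mathbb P(\mathcal A\times X+\mathbf 1)$ ($\infty$); $\mathbf P_a(x,S)=\alpha(x)(\{a\}\times S)$. $C_\omega(u)=\{v\in\mathcal A^\omega:u\sqsubseteq v\}$, $C_\infty(u)=\{v\in\mathcal A^\infty:u\sqsubseteq v\}$ ($\mathcal A^\infty=\mathcal A^*\cup\mathcal A^\omega$).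 $\mathcal S_0=\{\emptyset\}$, $\mathcal S_*=\{\emptyset\}\cup\{\{u\}:u\in\mathcal A^*\}$, $\mathcal S_\omega=\{\emptyset\}\cup\{C_\omega(u)\}$, $\mathcal S_\infty=\{\emptyset\}\cup\{\{u\}\}\cup\{C_\infty(u)\}$ ($u\in\mathcal A^*$). Trace pre-measure: $\mathbf{tr}(x)(\emptyset)=0$; for $\diamond\in\{*,\infty\}$: $\mathbf{tr}(x)(\{\epsilon\})=\alpha(x)(\mathbf 1)$, $\mathbf{tr}(x)(\{au\})=\int\mathbf{tr}(x')(\{u\})\,d\mathbf P_a(x,x')$; for $\diamond\in\{\omega,\infty\}$: $\mathbf{tr}(x)(C_\diamond(\epsilon))=1$, $\mathbf{tr}(x)(C_\diamond(au))=\int\mathbf{tr}(x')(C_\diamond(u))\,d\mathbf P_a(x,x')$. It is known (from the paper) that each $\mathbf{tr}(x)$ is a $\sigma$-finite pre-measure with a unique extension that is a sub-probability (resp. probability for $\omega,\infty$) measure. *)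

From HB Require Import structures.
From mathcomp Require Import all_boot all_order all_algebra.
From mathcomp Require Import all_classical all_reals all_analysis measurable_realfun.
Set Implicit Arguments. Unset Strict Implicit. Unset Printing Implicit Defensive.
Import Order.TTheory GRing.Theory Num.Theory.
Local Open Scope classical_set_scope.
Local Open Scope ring_scope.

Inductive diamond := D0 | Dstar | Domega | Dinf.

(* The measurable space  A x X + 1,  encoded as  option (A * X)              *)
(* (None = the terminating point checkmark).  A is finite with the discrete  *)
(* sigma-algebra P(A); the sigma-algebra of A x X + 1 is the coproduct of    *)
(* the product sigma-algebra P(A) (x) Sigma_X with the one of 1.  Since A is *)
(* finite (hence P(A) (x) Sigma_X = sets all of whose a-sections are         *)
(* measurable), a set S is measurable iff every section                      *)
(* {x | Some (a, x) \in S} is measurable in X.                               *)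
Section PtsY.
Variables (A : finType) (dX : measure_display) (X : measurableType dX).

Definition ptsY : Type := option (A * X).
HB.instance Definition _ := Pointed.on ptsY.

Definition ptsY_measurable : set (set ptsY) :=
  fun S => forall a : A, measurable [set x : X | S (Some (a, x))].

Lemma ptsY_measurable0 : ptsY_measurable set0.
Proof. by move=> a; exact: measurable0. Qed.

Lemma ptsY_measurableC (S : set ptsY) :
  ptsY_measurable S -> ptsY_measurable (~` S).
Proof.
move=> mS a; have -> : [set x : X | (~` S) (Some (a, x))] =
  ~` [set x : X | S (Some (a, x))] by [].
exact: measurableC.
Qed.

Lemma ptsY_measurableU (F : (set ptsY)^nat) :
  (forall i, ptsY_measurable (F i)) -> ptsY_measurable (\bigcup_i F i).
Proof.
move=> mF a; have -> : [set x : X | (\bigcup_i F i) (Some (a, x))] =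
  \bigcup_i [set x : X | F i (Some (a, x))] by [].
by apply: bigcupT_measurable => i; exact: mF.
Qed.

Definition ptsY_display : measure_display. Proof. by constructor. Qed.

HB.instance Definition _ := @isMeasurable.Build ptsY_display ptsY
  ptsY_measurable ptsY_measurable0 ptsY_measurableC ptsY_measurableU.
End PtsY.

Section Words.
Variable A : finType.

Definition word_t (d : diamond) : Type :=
  match d with
  | D0 => void
  | Dstar => seq A
  | Domega => nat -> A
  | Dinf => (seq A + (nat -> A))%type
  end.

Definition prefix_stream (u : seq A) (v : nat -> A) : Prop :=
  mkseq v (size u) = u.

Definition cyl_omega (u : seq A) : set (nat -> A) :=
  [set v | prefix_stream u v].

Definition cyl_inf (u : seq A) : set (seq A + (nat -> A)) :=
  [set w | match w with
           | inl v => prefix u v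
           | inr v => prefix_stream u v
           end].

Definition S_gen (d : diamond) : set (set (word_t d)) :=
  match d as d' return set (set (word_t d')) with
  | D0 => fun S => S = set0
  | Dstar => fun S => S = set0 \/ exists u : seq A, S = [set u]
  | Domega => fun S => S = set0 \/ exists u : seq A, S = cyl_omega u
  | Dinf => fun S => [\/ S = set0,
                        exists u : seq A, S = [set inl u] |
                        exists u : seq A, S = cyl_inf u]
  end.
End Words.
Arguments S_gen : clear implicits.

Definition is_measure_on (R : realType) (W : Type) (G : set (set W))
    (mu : set W -> \bar R) : Prop :=
  [/\ mu set0 = 0%E,
      (forall S, <<s G >> S -> (0 <= mu S)%E) &
      (forall F : nat -> set W, (forall i, <<s G >> (F i)) ->
         trivIset setT F ->
         (fun n => \sum_(0 <= i < n) mu (F i))%E @ \oo --> mu (\bigcup_n F n))].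

Section PTS.
Variables (R : realType) (A : finType) (dX : measure_display)
  (X : measurableType dX).

(* A PTS of type d: alpha is a measurable map X -> S(A x X + 1), i.e. a kernel
   (measurability of x |-> alpha x S for all measurable S is exactly
   measurability w.r.t. the evaluation sigma-algebra).  For d = 0, omega the
   codomain A x X is embedded in A x X + 1 by requiring no mass on checkmark;
   for d = omega, infty the measures are probability measures, otherwise
   sub-probability measures. *)
Definition is_PTS (d : diamond) (alpha : R.-ker X ~> ptsY A X) : Prop :=
  match d with
  | D0 => forall x, (alpha x setT <= 1)%E /\ alpha x [set None] = 0%E
  | Dstar => forall x, (alpha x setT <= 1)%E
  | Domega => forall x, alpha x setT = 1%E /\ alpha x [set None] = 0%E
  | Dinf => forall x, alpha x setT = 1%E
  end.

Variable alpha : R.-ker X ~> ptsY A X.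

(* lift_a g : A x X + 1 -> \bar R, (b, x') |-> [b = a] g x', checkmark |-> 0;
   so that  \int[alpha x]_y lift_a a g y  =  \int g dP_a(x, .)  where
   P_a(x, S) = alpha(x)({a} x S). *)
Definition lift_a (a : A) (g : X -> \bar R) (y : ptsY A X) : \bar R :=
  match y with
  | Some (b, x') => if b == a then g x' else 0%E
  | None => 0%E
  end.

Definition intPa (a : A) (x : X) (g : X -> \bar R) : \bar R :=
  (\int[alpha x]_y lift_a a g y)%E.

Fixpoint tr_fin (u : seq A) : X -> \bar R :=
  match u with
  | [::] => fun x => alpha x [set None]
  | a :: u' => fun x => intPa a x (tr_fin u')
  end.

Fixpoint tr_cyl (u : seq A) : X -> \bar R :=
  match u with
  | [::] => fun _ => 1%E
  | a :: u' => fun x => intPa a x (tr_cyl u')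
  end.

Definition tr_extends (d : diamond) :
    (X -> set (word_t A d) -> \bar R) -> Prop :=
  match d as d' return (X -> set (word_t A d') -> \bar R) -> Prop with
  | D0 => fun tr => forall x, tr x set0 = 0%E
  | Dstar => fun tr => forall x, tr x set0 = 0%E /\
      (forall u, tr x [set u] = tr_fin u x)
  | Domega => fun tr => forall x, tr x set0 = 0%E /\
      (forall u, tr x (cyl_omega u) = tr_cyl u x)
  | Dinf => fun tr => forall x, [/\ tr x set0 = 0%E,
      (forall u, tr x [set inl u] = tr_fin u x) &
      (forall u, tr x (cyl_inf u) = tr_cyl u x)]
  end.
End PTS.

From HB Require Import structures.
From mathcomp Require Import all_boot all_order all_algebra.
From mathcomp Require Import all_classical all_reals all_analysis measurable_realfun.
Set Implicit Arguments. Unset Strict Implicit. Unset Printing Implicit Defensive.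
Import Order.TTheory GRing.Theory Num.Theory.
Local Open Scope classical_set_scope.
Local Open Scope ring_scope.

(* On the generators, tr(x)({u}) and tr(x)(C(u)) are iterated integrals of
   nonnegative measurable functions against the kernel alpha, hence measurable
   in x.  The sets S for which x |-> tr(x)(S) is measurable form a Dynkin
   system: complements because each tr(x) is finite, disjoint countable unions
   because the partial sums converge pointwise.  For omega and infinity the
   generators form a pi-system (two cylinders are nested or disjoint), so the
   pi-lambda theorem reaches all of sigma(S_d).  For 0 and * the space of
   words is countable, and every set is a disjoint union of singletons. *)

Section kernel_iterates.
Variables (R : realType) (A : finType) (dX : measure_display)
  (X : measurableType dX) (alpha : R.-ker X ~> ptsY A X).

Lemma lift_a_ge0 (a : A) (g : X -> \bar R) : (forall x, 0 <= g x)%E ->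
  forall y, (0 <= lift_a a g y)%E.
Proof. by move=> g0 [[b x]|] //=; case: ifP. Qed.

Lemma measurable_lift_a (a : A) (g : X -> \bar R) : measurable_fun setT g ->
  measurable_fun setT (lift_a a g).
Proof.
move=> mg _ B mB.
change (ptsY_measurable (setT `&` lift_a a g @^-1` B)) => b /=.
have [ba|ba] := eqVneq b a.
  by rewrite (_ : [set x | _] = setT `&` g @^-1` B); [exact: mg|].
have [B0|B0] := pselect (B 0%E).
  by rewrite (_ : [set x | _] = setT) //; apply/seteqP; split => x //=.
by rewrite (_ : [set x | _] = set0) //; apply/seteqP; split => x //= [].
Qed.

Lemma intPa_ge0 a x (g : X -> \bar R) : (forall x, 0 <= g x)%E ->
  (0 <= intPa alpha a x g)%E.
Proof. by move=> g0; apply: integral_ge0 => y _; exact: lift_a_ge0. Qed.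

Lemma measurable_intPa a (g : X -> \bar R) : (forall x, 0 <= g x)%E ->
  measurable_fun setT g -> measurable_fun setT (fun x => intPa alpha a x g).
Proof.
move=> g0 mg; apply: (measurable_fun_integral_kernel (l := alpha)).
- by move=> U mU; exact: measurable_kernel.
- exact: lift_a_ge0.
- exact: measurable_lift_a.
Qed.

Lemma tr_fin_ge0 u x : (0 <= tr_fin alpha u x)%E.
Proof. by elim: u x => [|a u IH] x /=; [exact: measure_ge0|exact: intPa_ge0]. Qed.

Lemma tr_cyl_ge0 u x : (0 <= tr_cyl alpha u x)%E.
Proof. by elim: u x => [|a u IH] x /=; [exact: lee01|exact: intPa_ge0]. Qed.

Lemma measurable_tr_fin u : measurable_fun setT (tr_fin alpha u).
Proof.
elim: u => [|a u IH] /=; last exact: measurable_intPa (@tr_fin_ge0 u) IH.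
apply: (measurable_kernel alpha [set None]).
change (ptsY_measurable ([set None] : set (ptsY A X))) => b /=.
by rewrite (_ : [set x | _] = set0) //; apply/seteqP; split => x.
Qed.

Lemma measurable_tr_cyl u : measurable_fun setT (tr_cyl alpha u).
Proof.
elim: u => [|a u IH] /=; first exact: measurable_cst.
exact: measurable_intPa (@tr_cyl_ge0 u) IH.
Qed.

End kernel_iterates.

Section measure_families.
Variables (R : realType) (dX : measure_display) (X : measurableType dX).
Variables (W : Type) (G : set (set W)) (mu : X -> set W -> \bar R).
Hypothesis mu_measure : forall x, is_measure_on G (mu x).

Lemma g_sigma_algebraC S : <<s G >> S -> <<s G >> (~` S).
Proof. by rewrite -setTD; exact: sigma_algebraCD. Qed.

Lemma measurable_fun_measure0 : measurable_fun setT (fun x => mu x set0).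
Proof.
rewrite (_ : (fun x => _) = cst 0%E); first exact: measurable_cst.
by apply/funext => x; have [] := mu_measure x.
Qed.

Lemma measure_on_setU x S T : <<s G >> S -> <<s G >> T -> S `&` T = set0 ->
  mu x (S `|` T) = (mu x S + mu x T)%E.
Proof.
move=> mS mT ST; have [mu0 _ mu_sigma_additive] := mu_measure x.
have mST i : <<s G >> (bigcup2 S T i).
  by case: i => [|[|i]] //=; exact: sigma_algebra0.
have := mu_sigma_additive _ mST; rewrite -trivIset_bigcup2 bigcup2E => /(_ ST).
suff lim_sum : (fun n => \sum_(0 <= i < n) mu x (bigcup2 S T i))%E @ \oo
    --> (mu x S + mu x T)%E by move/cvg_unique; apply.
apply: cvg_near_cst; exists 2%N => // n /= n2.
rewrite (big_cat_nat _ n2) //= big_nat_recl // big_nat_recl // big_geq //.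
by rewrite adde0 big_nat_cond big1 ?adde0 // => -[|[|i]].
Qed.

Lemma measure_on_setC x S : <<s G >> S -> mu x setT \is a fin_num ->
  mu x (~` S) = (mu x setT - mu x S)%E.
Proof.
move=> mS fin_T; have mCS := g_sigma_algebraC mS.
have TE : mu x setT = (mu x (~` S) + mu x S)%E.
  by rewrite -(setvU S) measure_on_setU // setICl.
by move: fin_T; rewrite TE fin_numD => /andP[_ fin_S]; rewrite addeK.
Qed.

Lemma measurable_fun_measure_bigcup (F : nat -> set W) :
  (forall i, <<s G >> (F i)) -> trivIset setT F ->
  (forall i, measurable_fun setT (fun x => mu x (F i))) ->
  measurable_fun setT (fun x => mu x (\bigcup_n F n)).
Proof.
move=> mF tF mmF.
apply: (emeasurable_fun_cvg (fun n x => \sum_(0 <= i < n) mu x (F i))%E).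
  by move=> n; exact: emeasurable_sum.
by move=> x _; have [_ _] := mu_measure x; exact.
Qed.

Lemma measurable_fun_measure_sigma : setI_closed G ->
  (forall x, mu x setT \is a fin_num) ->
  measurable_fun setT (fun x => mu x setT) ->
  (forall S, G S -> measurable_fun setT (fun x => mu x S)) ->
  forall S, <<s G >> S -> measurable_fun setT (fun x => mu x S).
Proof.
move=> GI fin_T mT mG.
pose H := [set S | <<s G >> S /\ measurable_fun setT (fun x => mu x S)].
suff : <<s G >> `<=` H by move=> + S mS => /(_ S mS) [].
apply: (lambda_system_subset GI); last by [].
- apply/dynkin_lambda_system; split.
  + split=> //; have := g_sigma_algebraC (@sigma_algebra0 _ setT G).
    by rewrite setC0.
  + move=> S [mS mmS]; split; first exact: g_sigma_algebraC.
    rewrite (_ : (fun x => _) = (fun x => mu x setT - mu x S)%E).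
      exact: emeasurable_funB.
    by apply/funext => x; exact: measure_on_setC.
  + move=> F tF HF; split.
      by apply: sigma_algebra_bigcup => n; case: (HF n).
    by apply: measurable_fun_measure_bigcup => // n; case: (HF n).
- by move=> S GS; split; [exact: sub_sigma_algebra|exact: mG].
Qed.

End measure_families.

Section countable_measure_families.
Variables (R : realType) (dX : measure_display) (X : measurableType dX).
Variables (W : countType) (G : set (set W)) (mu : X -> set W -> \bar R).
Hypothesis mu_measure : forall x, is_measure_on G (mu x).

Lemma measurable_fun_measure_countable :
  (forall w, <<s G >> [set w]) ->
  (forall w, measurable_fun setT (fun x => mu x [set w])) ->
  forall S, measurable_fun setT (fun x => mu x S).
Proof.
move=> G1 m1 S.
pose F n := S `&` [set w | pickle w = n].
have F_sub1 n : F n = set0 \/ exists w, F n = [set w].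
  have [[w [Sw <-]]|F0] := pselect (exists w, F n w); last first.
    by left; apply/seteqP; split => // w Fw; apply: F0; exists w.
  right; exists w; apply/seteqP; split => [v [Sv /(pcan_inj pickleK) ->]|v ->] //.
have mF n : <<s G >> (F n).
  by case: (F_sub1 n) => [->|[w ->]]; [exact: sigma_algebra0|exact: G1].
rewrite (_ : S = \bigcup_n F n); last first.
  by apply/seteqP; split => [w Sw|w [n _ []//]]; exists (pickle w).
apply: measurable_fun_measure_bigcup => // [|n].
  apply/trivIsetP => i j _ _ ij; apply/seteqP; split => // w [[_ wi] [_ wj]].
  by move/eqP: ij; apply; rewrite -wi -wj.
by case: (F_sub1 n) => [->|[w ->]] //; exact: measurable_fun_measure0.
Qed.

End countable_measure_families.

Section cylinders.
Variable A : finType.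

Lemma take_mkseq (f : nat -> A) {n m} : (n <= m)%N ->
  take n (mkseq f m) = mkseq f n.
Proof. by move=> nm; rewrite /mkseq -map_take take_iota (minn_idPl nm). Qed.

Lemma cyl_omegaI (u v : seq A) : (size u <= size v)%N ->
  cyl_omega u `&` cyl_omega v =
  if take (size u) v == u then cyl_omega v else set0.
Proof.
move=> uv; rewrite /cyl_omega /prefix_stream; apply/seteqP; split => w /=.
  move=> [wu wv].
  have -> : take (size u) v = u by rewrite -wv take_mkseq.
  by rewrite eqxx.
by case: eqP => [vu|_ //] wv; split => //; rewrite -(take_mkseq w uv) wv.
Qed.

Lemma cyl_infI (u v : seq A) : (size u <= size v)%N ->
  cyl_inf u `&` cyl_inf v = if take (size u) v == u then cyl_inf v else set0.
Proof.
move=> uv; rewrite /cyl_inf /prefix_stream.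
apply/seteqP; split => [[t|w]|[t|w]] /=.
- rewrite !prefixE => -[/eqP tu /eqP tv].
  have -> : take (size u) v = u by rewrite -tv take_takel.
  by rewrite eqxx /= prefixE tv.
- move=> [wu wv].
  have -> : take (size u) v = u by rewrite -wv take_mkseq.
  by rewrite eqxx.
- case: eqP => [vu|_ //] /= vt; split => //; rewrite prefixE in vt.
  by rewrite prefixE -(take_takel _ uv) (eqP vt) vu.
- by case: eqP => [vu|_ //] wv; split => //; rewrite -(take_mkseq w uv) wv.
Qed.

Lemma cyl_omega_nil : cyl_omega [::] = [set: nat -> A].
Proof. by apply/seteqP; split. Qed.

Lemma cyl_inf_nil : cyl_inf [::] = [set: seq A + (nat -> A)].
Proof. by apply/seteqP; split => // -[t|w] _ //=; rewrite /cyl_inf /= prefix0s. Qed.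

Lemma S_gen_omega_setI_closed : setI_closed (S_gen A Domega).
Proof.
move=> B C /= [->|[u ->]]; first by rewrite set0I; left.
move=> [->|[v ->]]; first by rewrite setI0; left.
have [uv|/ltnW vu] := leqP (size u) (size v).
  by rewrite cyl_omegaI //; case: ifP => _; [right; exists v|left].
by rewrite setIC cyl_omegaI //; case: ifP => _; [right; exists u|left].
Qed.

Lemma S_gen_inf_setI_closed : setI_closed (S_gen A Dinf).
Proof.
have set1I_gen u C : S_gen A Dinf ([set inl u] `&` C).
  by rewrite set1I; case: ifP => _; [constructor 2; exists u|constructor 1].
move=> B C /= [->|[u ->]|[u ->]]; first by rewrite set0I; constructor 1.
  by move=> _; exact: set1I_gen.
move=> [->|[v ->]|[v ->]]; first by rewrite setI0; constructor 1.
  by rewrite setIC; exact: set1I_gen.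
have [uv|/ltnW vu] := leqP (size u) (size v).
  by rewrite cyl_infI //; case: ifP => _; [constructor 3; exists v|constructor 1].
by rewrite setIC cyl_infI //; case: ifP => _; [constructor 3; exists u|constructor 1].
Qed.

End cylinders.

Section trace.
Variables (R : realType) (A : finType) (dX : measure_display)
  (X : measurableType dX) (alpha : R.-ker X ~> ptsY A X).

Lemma measurable_trace_star (tr : X -> set (word_t A Dstar) -> \bar R) :
  (forall x, is_measure_on (S_gen A Dstar) (tr x)) -> tr_extends alpha tr ->
  forall S, measurable_fun setT (fun x => tr x S).
Proof.
move=> tr_measure tr_ext; apply: measurable_fun_measure_countable => // u.
  by apply: sub_sigma_algebra; right; exists u.
rewrite (_ : (fun x => _) = tr_fin alpha u); first exact: measurable_tr_fin.
by apply/funext => x; case: (tr_ext x) => _ ->.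
Qed.

Lemma measurable_trace_omega (tr : X -> set (word_t A Domega) -> \bar R) :
  (forall x, is_measure_on (S_gen A Domega) (tr x)) -> tr_extends alpha tr ->
  forall S, <<s S_gen A Domega >> S -> measurable_fun setT (fun x => tr x S).
Proof.
move=> tr_measure tr_ext.
have mG S : S_gen A Domega S -> measurable_fun setT (fun x => tr x S).
  case=> [->|[u ->]]; first exact: measurable_fun_measure0 tr_measure.
  rewrite (_ : (fun x => _) = tr_cyl alpha u); first exact: measurable_tr_cyl.
  by apply/funext => x; case: (tr_ext x) => _ ->.
apply: (measurable_fun_measure_sigma tr_measure
  (@S_gen_omega_setI_closed A) _ _ mG).
- by move=> x; rewrite -cyl_omega_nil; case: (tr_ext x) => _ ->.
- by rewrite -cyl_omega_nil; apply: mG; right; exists [::].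
Qed.

Lemma measurable_trace_inf (tr : X -> set (word_t A Dinf) -> \bar R) :
  (forall x, is_measure_on (S_gen A Dinf) (tr x)) -> tr_extends alpha tr ->
  forall S, <<s S_gen A Dinf >> S -> measurable_fun setT (fun x => tr x S).
Proof.
move=> tr_measure tr_ext.
have mG S : S_gen A Dinf S -> measurable_fun setT (fun x => tr x S).
  case=> [->|[u ->]|[u ->]]; first exact: measurable_fun_measure0 tr_measure.
  - rewrite (_ : (fun x => _) = tr_fin alpha u); first exact: measurable_tr_fin.
    by apply/funext => x; case: (tr_ext x) => _ ->.
  - rewrite (_ : (fun x => _) = tr_cyl alpha u); first exact: measurable_tr_cyl.
    by apply/funext => x; case: (tr_ext x) => _ _ ->.
apply: (measurable_fun_measure_sigma tr_measure
  (@S_gen_inf_setI_closed A) _ _ mG).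
- by move=> x; rewrite -cyl_inf_nil; case: (tr_ext x) => _ _ ->.
- by rewrite -cyl_inf_nil; apply: mG; constructor 3; exists [::].
Qed.

End trace.

Theorem mainTheorem7 (R : realType) (A : finType) (dX : measure_display)
    (X : measurableType dX) (d : diamond) (alpha : R.-ker X ~> ptsY A X)
    (Hpts : is_PTS d alpha)
    (tr : X -> set (word_t A d) -> \bar R)
    (Htr_measure : forall x, is_measure_on (S_gen A d) (tr x))
    (Htr_ext : tr_extends alpha tr) :
  forall S : set (word_t A d), <<s S_gen A d >> S ->
    measurable_fun [set: X] (fun x => tr x S).
Proof.
case: d Hpts tr Htr_measure Htr_ext => _ tr tr_measure tr_ext S mS.
- by apply: (measurable_fun_measure_countable (W := void) tr_measure) => -[].
- exact: measurable_trace_star.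
- exact: measurable_trace_omega.
- exact: measurable_trace_inf.
Qed.
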